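(* Let $G$ be an undirected graph (a digraph with symmetric edge relation, loops allowed). (i) If every connected component of $G$ is either trivial or a complete graph with loops, then $\mathbb{A}(G)$ satisfies every bracketing identity. (ii) If every connected component of $G$ is either trivial, a complete graph with loops, or a complete bipartite graph, and the last case occurs at least once, then $\mathbb{A}(G)$ satisfies a nontrivial bracketing identity $t\approx t'$ ($t,t'\in B_n$, $t\ne t'$) if and only if $M_{t,t'}$ is even. (iii) Otherwise $\mathbb{A}(G)$ satisfies no nontrivial bracketing identity.
   Context: A connected component is trivial if it is a single vertex without a loop. A complete graph with loops on a vertex set $K$ has edge set $K\times K$; a complete bipartite graph on $K$ has $K=A\cup B$ with $A,B$ nonempty and disjoint and edge set $(A\times B)\cup(B\times A)$. The graph algebra $\mathbb{A}(G)$ is the groupoid on $V\cup\{\infty\}$ with $xy=x$ if $x,y\in V$ and $(x,y)\in E$, and $xy=\infty$ otherwise; it satisfies $t\approx t'$ if $t,t'$ induce the same term operation. $B_n$ is the set of binary terms in which $x_1,\dots,x_n$ each occur once in this order. For $t\in B_n$, the rooted tree $G(t)$ is defined recursively: $G(x_i)$ is the single vertex $x_i$; $G(t_1t_2)$ is $G(t_1)\cup G(t_2)$ plus an edge from the leftmost variable of $t_1$ to the leftmost variable of $t_2$; root $x_1$. With $T=G(t)$, $T'=G(t')$ and $d_T(x)$ the depth of $x$ in $T$, $M_{t,t'}=\gcd\{|d_T(x)-d_{T'}(x)|:x\in\{x_1,\dots,x_n\}\}$. *)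

From mathcomp Require Import all_boot.
From Stdlib Require Import Relations.Relation_Operators.
Set Implicit Arguments. Unset Strict Implicit. Unset Printing Implicit Defensive.

(* The graph algebra A(G) on V ∪ {∞}: represented as option V, None = ∞. *)
Definition gmul (V : Type) (E : V -> V -> bool) (x y : option V) : option V :=
  match x, y with
  | Some a, Some b => if E a b then Some a else None
  | _, _ => None
  end.

(* Bracketings: binary trees of shape; a term in B_n is a shape with n leaves,
   the leaves being labelled x_1, ..., x_n from left to right (0-based here). *)
Inductive bterm : Type := BLeaf | BNode of bterm & bterm.

Fixpoint leaves (t : bterm) : nat :=
  match t with BLeaf => 1 | BNode l r => leaves l + leaves r end.

Fixpoint teval (V : Type) (E : V -> V -> bool) (t : bterm) (k : nat)
    (a : nat -> option V) : option V :=
  match t with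
  | BLeaf => a k
  | BNode l r => gmul E (teval E l k a) (teval E r (k + leaves l) a)
  end.

Definition satisfies (V : Type) (E : V -> V -> bool) (t t' : bterm) : Prop :=
  forall a : nat -> option V, teval E t 0 a = teval E t' 0 a.

(* Depth of variable x_{i+1} in the rooted tree G(t) (root = leftmost variable);
   in G(t1 t2) the root of G(t2) is attached as child of the root of G(t1). *)
Fixpoint depth (t : bterm) (i : nat) : nat :=
  match t with
  | BLeaf => 0
  | BNode l r => if i < leaves l then depth l i else (depth r (i - leaves l)).+1
  end.

Definition natdist (a b : nat) : nat := (a - b) + (b - a).

Definition Mtt (n : nat) (t t' : bterm) : nat :=
  \big[gcdn/0]_(i < n) natdist (depth t i) (depth t' i).

Definition comp (V : Type) (E : V -> V -> bool) (v : V) : V -> Prop :=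
  fun w => clos_refl_trans V (fun x y => E x y) v w.

Definition is_trivial (V : Type) (E : V -> V -> bool) (K : V -> Prop) : Prop :=
  exists v, (forall w, K w <-> w = v) /\ ~ E v v.

Definition is_complete_loops (V : Type) (E : V -> V -> bool) (K : V -> Prop) : Prop :=
  forall x y, K x -> K y -> E x y.

Definition is_complete_bipartite (V : Type) (E : V -> V -> bool) (K : V -> Prop) : Prop :=
  exists A B : V -> Prop,
    (exists a, A a) /\ (exists b, B b) /\ (forall x, ~ (A x /\ B x)) /\
    (forall x, K x <-> A x \/ B x) /\
    (forall x y, K x -> K y -> (E x y <-> (A x /\ B y) \/ (B x /\ A y))).

Definition case_i (V : Type) (E : V -> V -> bool) : Prop :=
  forall v, is_trivial E (comp E v) \/ is_complete_loops E (comp E v).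

Definition case_ii (V : Type) (E : V -> V -> bool) : Prop :=
  (forall v, is_trivial E (comp E v) \/ is_complete_loops E (comp E v)
             \/ is_complete_bipartite E (comp E v)) /\
  (exists v, is_complete_bipartite E (comp E v)).

(* On an assignment avoiding oo, a bracketing t evaluates to the value of x_1
   exactly when the assignment is a homomorphism from the tree G(t) into G, and
   to oo otherwise; so t ~ t' holds iff G(t) and G(t') have the same
   homomorphisms into G.  A homomorphism sends x_i to the end of a walk of
   length d_T(x_i) starting at the image of the root, and when every walk of odd
   length joins adjacent vertices the converse holds.  In case (i) G is
   transitive, so these walk relations only see whether the depth is 0; the
   component conditions of (i) and (ii) say exactly that every walk of length 3
   joins adjacent vertices, so only the parity of the depth matters, and colouring
   G(t) by depth parity onto an edge of a bipartite component shows that the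
   parities must agree.  In every other graph each length d >= 2 carries a walk
   between non-adjacent vertices (if all of them were edges, G would fall under
   (i) for even d and under (ii) for odd d); laid along the depths of G(t)
   at the first leaf where the depths in t and t' differ, it gives a
   homomorphism from G(t) that is not one from G(t'). *)

From Pilot Require Import Defs.
From mathcomp Require Import all_boot zify.
From Stdlib Require Import Relations.Relation_Operators Classical.
Set Implicit Arguments. Unset Strict Implicit. Unset Printing Implicit Defensive.

(* The parent of leaf [i] in G(t), leaves numbered from 0; junk at the root. *)
Fixpoint parent (t : bterm) (i : nat) : nat :=
  match t with
  | BLeaf => 0
  | BNode l r => if i < leaves l then parent l i
                 else if i == leaves l then 0 else leaves l + parent r (i - leaves l)
  end.

Lemma leaves_gt0 t : 0 < leaves t.
Proof. by elim: t => //= l IHl r _; rewrite addn_gt0 IHl. Qed.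

Lemma depth0 t : depth t 0 = 0.
Proof. by elim: t => //= l IHl r _; rewrite leaves_gt0. Qed.

Lemma depth_node_l l r i : i < leaves l -> depth (BNode l r) i = depth l i.
Proof. by move=> /= ->. Qed.

Lemma depth_node_r l r j : depth (BNode l r) (leaves l + j) = (depth r j).+1.
Proof. by rewrite /= ltnNge leq_addr /= addKn. Qed.

Lemma parent_node_l l r i : i < leaves l -> parent (BNode l r) i = parent l i.
Proof. by move=> /= ->. Qed.

Lemma parent_node_r l r j : parent (BNode l r) (leaves l + j) =
  if j == 0 then 0 else leaves l + parent r j.
Proof.
rewrite /= ltnNge leq_addr /= addKn.
by case: j => [|j]; rewrite ?addn0 ?eqxx // -{2}(addn0 (leaves l)) eqn_add2l.
Qed.

Lemma depth_node_root_r l r : depth (BNode l r) (leaves l) = 1.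
Proof. by have := depth_node_r l r 0; rewrite addn0 depth0. Qed.

Lemma parent_node_root_r l r : parent (BNode l r) (leaves l) = 0.
Proof. by have := parent_node_r l r 0; rewrite addn0. Qed.

Lemma parent_lt t i : 0 < i < leaves t -> parent t i < i.
Proof.
elim: t i => [|l IHl r IHr] i /=; first lia.
move=> lt_i; case: ifP => [lt_il|/negbT ge_il]; first by apply: IHl; lia.
case: ifP => [/eqP|/negbT ne_il]; first lia.
have /IHr : 0 < i - leaves l < leaves r by lia.
lia.
Qed.

Lemma depth_parent t i : 0 < i < leaves t -> depth t i = (depth t (parent t i)).+1.
Proof.
elim: t i => [|l IHl r IHr] i lt_i; first by move: lt_i => /=; lia.
have {}lt_i : 0 < i < leaves l + leaves r := lt_i.
case: (ltngtP i (leaves l)) => [lt_il|gt_il|->].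
- have lt_pi : parent l i < i by apply: parent_lt; lia.
  rewrite (parent_node_l r lt_il) !depth_node_l ?(ltn_trans lt_pi) // IHl //; lia.
- have -> : i = leaves l + (i - leaves l) by lia.
  rewrite parent_node_r ifN_eq; last by rewrite subn_eq0 -ltnNge.
  rewrite !depth_node_r IHr //; lia.
- by rewrite parent_node_root_r depth_node_root_r depth0.
Qed.

Lemma depth_eq0 t i : i < leaves t -> (depth t i == 0) = (i == 0).
Proof.
case: i => [|i] lt_it; first by rewrite depth0.
by rewrite depth_parent.
Qed.

Lemma depth_node_gt1 l r i : leaves l < i < leaves l + leaves r -> 1 < depth (BNode l r) i.
Proof.
move=> lt_i; have -> : i = leaves l + (i - leaves l) by lia.
by rewrite depth_node_r ltnS lt0n depth_eq0 ?subn_eq0 -?ltnNge; lia.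
Qed.

Lemma depth_inj t t' : leaves t = leaves t' ->
  (forall i, i < leaves t -> depth t i = depth t' i) -> t = t'.
Proof.
elim: t t' => [|l IHl r IHr] [|l' r'] // eq_n eq_d; move: eq_n => /=.
- by have := leaves_gt0 l'; have := leaves_gt0 r'; lia.
- by have := leaves_gt0 l; have := leaves_gt0 r; lia.
move=> eq_n; have := leaves_gt0 r; have := leaves_gt0 r' => r'_gt0 r_gt0.
have eq_nl : leaves l = leaves l'.
  case: (ltngtP (leaves l) (leaves l')) => // [lt|gt].
  - have := eq_d (leaves l') ltac:(rewrite /=; lia).
    by rewrite depth_node_root_r; have := @depth_node_gt1 l r (leaves l'); lia.
  - have := eq_d (leaves l) ltac:(rewrite /=; lia).
    by rewrite depth_node_root_r; have := @depth_node_gt1 l' r' (leaves l); lia.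
congr BNode.
- apply: IHl => // i lt_il; have := eq_d i ltac:(rewrite /=; lia).
  by rewrite !depth_node_l // -eq_nl.
- apply: IHr => [|j lt_jr]; first lia.
  have := eq_d (leaves l + j) ltac:(rewrite /=; lia).
  by rewrite {2}eq_nl !depth_node_r => -[].
Qed.

Lemma odd_natdist m n : odd (natdist m n) = odd m (+) odd n.
Proof.
rewrite /natdist; case: (leqP m n) => [le_mn|/ltnW le_nm].
  by rewrite (eqP le_mn) oddB // addbC.
by rewrite (eqP le_nm) addn0 oddB.
Qed.

Lemma Mtt_evenP n t t' :
  reflect (forall i, i < n -> odd (depth t i) = odd (depth t' i)) (~~ odd (Mtt n t t')).
Proof.
rewrite -dvdn2; apply: (iffP idP) => [/dvdn_biggcdP dvd2 i lt_in | eq_odd].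
  by move: (dvd2 (Ordinal lt_in) isT); rewrite dvdn2 odd_natdist negb_add => /eqP.
by rewrite /Mtt; apply/dvdn_biggcdP => i _; rewrite dvdn2 odd_natdist eq_odd ?addbb.
Qed.

Section Evaluation.
Variables (V : Type) (E : rel V).

Definition is_hom (t : bterm) (k : nat) (a : nat -> V) : Prop :=
  forall i, 0 < i < leaves t -> E (a (k + parent t i)) (a (k + i)).

Lemma is_hom_node l r k a : is_hom (BNode l r) k a <->
  [/\ is_hom l k a, is_hom r (k + leaves l) a & E (a k) (a (k + leaves l))].
Proof.
have l_gt0 := leaves_gt0 l; have r_gt0 := leaves_gt0 r.
split=> [hom | [hom_l hom_r e_lr] i lt_i].
  split=> [i lt_il | j lt_jr |].
  - by have := hom i ltac:(rewrite /=; lia); rewrite parent_node_l //; lia.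
  - have := hom (leaves l + j) ltac:(rewrite /=; lia).
    by rewrite parent_node_r ifN_eq ?addnA //; lia.
  - by have := hom (leaves l) ltac:(rewrite /=; lia); rewrite parent_node_root_r addn0.
move: lt_i; rewrite [leaves _]/= => lt_i.
case: (ltngtP i (leaves l)) => [lt_il|gt_il|->].
- by rewrite parent_node_l //; apply: hom_l; lia.
- have -> : i = leaves l + (i - leaves l) by lia.
  by rewrite parent_node_r ifN_eq ?addnA; [apply: hom_r|]; lia.
- by rewrite parent_node_root_r addn0.
Qed.

Lemma teval_head t k b x : teval E t k b = Some x -> b k = Some x.
Proof.
elim: t k x => [|l IHl r _] k x //=.
case eval_l: (teval E l k b) => [y|] //; case: (teval E r _ b) => [z|] //=.
by case: ifP => // _ [<-]; apply: IHl.
Qed.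

Lemma teval_None t k b j :
  k <= j < k + leaves t -> b j = None -> teval E t k b = None.
Proof.
elim: t k => [|l IHl r IHr] k /= lt_j bj; first by have -> : k = j by lia.
case: (ltnP j (k + leaves l)) => [lt_jl|ge_jl]; first by rewrite (IHl k) //; lia.
by rewrite (IHr (k + leaves l)) //; [case: (teval E l k b) | lia].
Qed.

Lemma eq_teval t k b b' :
  (forall j, k <= j < k + leaves t -> b j = b' j) -> teval E t k b = teval E t k b'.
Proof.
elim: t k => [|l IHl r IHr] k /= eq_b; first by apply: eq_b; lia.
by rewrite (IHl k) ?(IHr (k + leaves l)) // => j lt_j; apply: eq_b; lia.
Qed.

Lemma teval_SomeP t k a :
  teval E t k (fun j => Some (a j)) = Some (a k) <-> is_hom t k a.
Proof.
elim: t k => [|l IHl r IHr] k; first by split=> // _ i /=; lia.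
rewrite is_hom_node /=; split.
- case eval_l: (teval E l k _) => [x|] //; case eval_r: (teval E r _ _) => [y|] //=.
  case: ifP => // e_xy [eq_x]; subst x; have [eq_y] := teval_head eval_r; subst y.
  by split; [apply/IHl | apply/IHr |].
- by case=> /IHl -> /IHr -> /= ->.
Qed.

Lemma teval_not_hom t k a :
  ~ is_hom t k a -> teval E t k (fun j => Some (a j)) = None.
Proof.
move/teval_SomeP; case eval: (teval E t k _) => [x|] // not_hom.
by have [eq_x] := teval_head eval; case: not_hom; rewrite eq_x.
Qed.

Lemma satisfiesP t t' : leaves t = leaves t' ->
  satisfies E t t' <-> forall a, is_hom t 0 a <-> is_hom t' 0 a.
Proof.
move=> eq_n; split=> [sat a | hom_eq b]; first by rewrite -!teval_SomeP sat.
have [[j lt_j bj] | total] := classic (exists2 j, j < leaves t & b j = None).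
  by rewrite !(@teval_None _ _ _ j) //; lia.
have [v0 b0] : exists v0, b 0 = Some v0.
  case b0: (b 0) => [v0|]; first by exists v0.
  by case: total; exists 0; rewrite ?leaves_gt0.
pose a j := odflt v0 (b j).
have eq_ba u : leaves u = leaves t -> teval E u 0 b = teval E u 0 (fun j => Some (a j)).
  move=> eq_nu; apply: eq_teval => j; rewrite add0n eq_nu => /andP [_ lt_j].
  by rewrite /a; case bj: (b j) => //; case: total; exists j.
rewrite !eq_ba //; have [hom|not_hom] := classic (is_hom t 0 a).
  by rewrite (teval_SomeP _ _ _).2 // (teval_SomeP _ _ _).2 -?hom_eq.
by rewrite !teval_not_hom -?hom_eq.
Qed.

End Evaluation.

Section Walks.
Variables (V : Type) (E : rel V).
Hypothesis Esym : symmetric E.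

Fixpoint walk (n : nat) (x y : V) : Prop :=
  if n is n'.+1 then exists2 z, E x z & walk n' z y else x = y.

Lemma walk1 x y : walk 1 x y <-> E x y.
Proof. by split=> [[z e_xz <-] | e_xy] //; exists y. Qed.

Lemma walk_cat m n x y z : walk m x y -> walk n y z -> walk (m + n) x z.
Proof.
elim: m x => [|m IHm] x /=; first by move->.
by case=> w e_xw w_wy w_yz; exists w; last exact: IHm w_wy w_yz.
Qed.

Lemma walk_rcons n x y z : walk n x y -> E y z -> walk n.+1 x z.
Proof. by move=> w_xy /walk1 w_yz; rewrite -addn1; apply: walk_cat w_xy w_yz. Qed.

Lemma walk_rev n x y : walk n x y -> walk n y x.
Proof.
elim: n x => [|n IHn] x /=; first by move->.
by case=> z e_xz /IHn w_yz; apply: walk_rcons w_yz _; rewrite Esym.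
Qed.

Lemma walk_loop n x : E x x -> walk n x x.
Proof. by move=> e_xx; elim: n => //= n IHn; exists x. Qed.

Lemma walk_bounce k x y : E x y -> walk k.*2 x x.
Proof. by move=> e_xy; elim: k => //= k IHk; exists y => //; exists x; rewrite // Esym. Qed.

Lemma walk_addn2 n x y : walk n.+1 x y -> walk n.+3 x y.
Proof. by case=> z e_xz w_zy; exists z => //; exists x; [rewrite Esym | exists z]. Qed.

Lemma compP v w : Defs.comp E v w <-> exists n, walk n v w.
Proof.
split=> [|[n]].
- elim=> [x y e_xy | x | x y z _ [m w_xy] _ [n w_yz]].
  + by exists 1; apply/walk1.
  + by exists 0.
  + by exists (m + n); apply: walk_cat w_xy w_yz.
- elim: n v => [|n IHn] v /=; first by move->; apply: rt_refl.
  by case=> z e_vz /IHn; apply: rt_trans; apply: rt_step.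
Qed.

Lemma comp_walk v x y : Defs.comp E v x -> Defs.comp E v y -> exists n, walk n x y.
Proof.
move=> /compP [m w_vx] /compP [n w_vy].
by exists (m + n); apply: walk_cat (walk_rev w_vx) w_vy.
Qed.

Lemma comp_neighbor v u w : E v u -> Defs.comp E v w -> exists z, E w z.
Proof.
move=> e_vu /compP [[|n] w_vw]; first by rewrite -w_vw; exists u.
by case: (walk_rev w_vw) => z e_wz _; exists z.
Qed.

Lemma is_hom_walk t a i : is_hom E t 0 a -> i < leaves t -> walk (depth t i) (a 0) (a i).
Proof.
move=> hom; elim/ltn_ind: i => -[_ _ | i IH lt_i]; first by rewrite depth0.
have lt_pi : 0 < i.+1 < leaves t by [].
rewrite (depth_parent lt_pi); apply: walk_rcons (IH _ (parent_lt lt_pi) _) _.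
- exact: ltn_trans (parent_lt lt_pi) lt_i.
- by have := hom _ lt_pi; rewrite !add0n.
Qed.

Lemma is_hom_of_walks t a : (forall n x y, odd n -> walk n x y -> E x y) ->
  (forall i, i < leaves t -> walk (depth t i) (a 0) (a i)) -> is_hom E t 0 a.
Proof.
move=> odd_edge w i lt_i; rewrite !add0n.
have lt_pt : parent t i < leaves t by apply: ltn_trans (parent_lt lt_i) _; case/andP: lt_i.
apply: (odd_edge (depth t (parent t i) + depth t i)).
- by rewrite (depth_parent lt_i) addnS /= oddD addbb.
- by apply: walk_cat (walk_rev (w _ lt_pt)) (w _ _); case/andP: lt_i.
Qed.

Lemma satisfies_of_walk_eq t t' : (forall n x y, odd n -> walk n x y -> E x y) ->
  leaves t = leaves t' ->
  (forall i, i < leaves t -> forall x y, walk (depth t i) x y <-> walk (depth t' i) x y) ->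
  satisfies E t t'.
Proof.
move=> odd_edge eq_n eq_w; apply/satisfiesP => // a.
split=> /is_hom_walk hom; apply: is_hom_of_walks => // i lt_i.
- by rewrite -eq_n in lt_i; apply/eq_w/hom.
- by apply/eq_w/hom; rewrite -?eq_n.
Qed.

Lemma satisfies_depth_parity t t' x y : E x y -> ~~ E x x -> ~~ E y y ->
  leaves t = leaves t' -> satisfies E t t' ->
  forall i, i < leaves t -> odd (depth t i) = odd (depth t' i).
Proof.
move=> e_xy n_xx n_yy eq_n /(satisfiesP _ eq_n) hom_eq.
pose c d := if odd d then y else x.
have hom' : is_hom E t' 0 (fun j => c (depth t j)).
  apply/hom_eq => j lt_j; rewrite !add0n (depth_parent lt_j) /c /=.
  by case: (odd _); rewrite //= Esym.
elim/ltn_ind => -[_ _ | i IH lt_i]; first by rewrite !depth0.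
have lt_pi : 0 < i.+1 < leaves t' by rewrite -eq_n.
have lt_p := parent_lt lt_pi.
rewrite (depth_parent lt_pi) /= -IH //; last exact: ltn_trans lt_p lt_i.
move: (hom' _ lt_pi); rewrite !add0n /c.
case: (odd (depth t i.+1)); case: (odd (depth t _)) => //= e.
- by rewrite e in n_yy.
- by rewrite e in n_xx.
Qed.

Lemma walk_embed d x y : 0 < d -> walk d x y -> forall m,
  exists g : nat -> V, [/\ forall k, E (g k) (g k.+1), g m = x & g (m + d) = y].
Proof.
elim: d x => // -[|d] IH x _ [z e_xz w_zy] m.
  rewrite /= in w_zy; subst z.
  exists (fun k => if odd k == odd m then x else y); split; rewrite ?eqxx //.
    by move=> k /=; case: (odd k); case: (odd m); rewrite //= Esym.
  by rewrite addn1 /=; case: (odd m).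
have [g [walk_g g_m g_md]] := IH z isT w_zy m.+1.
exists (fun k => if k <= m then (if odd (m - k) then z else x) else g k).
split=> [k | | ]; last 2 first.
- by rewrite leqnn subnn.
- rewrite ifF -?g_md ?addSnnS //.
  by apply: negbTE; rewrite -ltnNge; lia.
case: (ltngtP k m) => [lt_km | gt_km | ->].
- rewrite subnS; move: lt_km; rewrite -subn_gt0.
  by case: (m - k) => // n _ /=; case: (odd n); rewrite //= Esym.
- exact: walk_g.
- by rewrite subnn g_m.
Qed.

Lemma not_satisfies_of_depth_lt t t' i :
  (forall d, 1 < d -> exists x y, walk d x y /\ ~~ E x y) ->
  leaves t = leaves t' -> i < leaves t ->
  (forall j, j < i -> depth t j = depth t' j) -> depth t' i < depth t i ->
  ~ satisfies E t t'.
Proof.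
move=> nonadj eq_n lt_i eq_d lt_d /(satisfiesP _ eq_n) hom_eq.
have i_gt0 : 0 < i by case: i lt_i eq_d lt_d => //; rewrite !depth0.
have lt_pi : 0 < i < leaves t' by rewrite i_gt0 -eq_n.
have lt_p := parent_lt lt_pi.
have := depth_parent lt_pi; rewrite -(eq_d _ lt_p) => d_i'.
set p := depth t (parent t' i) in d_i'.
have gap : 1 < depth t i - p by lia.
have [x [y [w_xy n_xy]]] := nonadj _ gap.
have [g [walk_g g_p g_i]] := walk_embed (ltnW gap) w_xy p.
have : is_hom E t 0 (fun j => g (depth t j)).
  by move=> j lt_j; rewrite !add0n (depth_parent lt_j).
move/hom_eq/(_ _ lt_pi); rewrite !add0n g_p.
by rewrite (_ : depth t i = p + (depth t i - p)) ?g_i ?(negbTE n_xy) //; lia.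
Qed.

Lemma distinct_not_satisfies t t' :
  (forall d, 1 < d -> exists x y, walk d x y /\ ~~ E x y) ->
  leaves t = leaves t' -> t <> t' -> ~ satisfies E t t'.
Proof.
move=> nonadj eq_n neq_t.
have [i lt_i ne_i] : exists2 i, i < leaves t & depth t i != depth t' i.
  apply: NNPP => eq_d; apply/neq_t/depth_inj => // i lt_i.
  by apply: NNPP => ne_i; apply: eq_d; exists i => //; apply/eqP.
case: (@ex_minnP (fun i => (i < leaves t) && (depth t i != depth t' i))).
  by exists i; rewrite lt_i.
move=> {lt_i ne_i}i /andP [lt_i ne_i] min_i.
have eq_d j : j < i -> depth t j = depth t' j.
  move=> lt_ji; have lt_jn := ltn_trans lt_ji lt_i.
  by apply/eqP; apply: contraTT lt_ji => ne_j; rewrite -leqNgt min_i // ne_j lt_jn.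
case: ltngtP ne_i => // [lt_d | gt_d] _.
- move=> sat; apply: (not_satisfies_of_depth_lt nonadj (esym eq_n) _ _ lt_d).
  + by rewrite -eq_n.
  + by move=> j /eq_d.
  + by move=> b; rewrite sat.
- exact: not_satisfies_of_depth_lt nonadj eq_n lt_i eq_d gt_d.
Qed.

Lemma case_i_trans : case_i E -> transitive E.
Proof.
move=> ci y x z e_xy e_yz.
have c_xx : Defs.comp E x x by apply: rt_refl.
have c_xy : Defs.comp E x y by apply: rt_step.
have c_xz : Defs.comp E x z by apply: rt_trans c_xy (rt_step _ _ _ _ e_yz).
case: (ci x) => [[v [comp_v n_vv]] | complete]; last exact: complete.
by move: e_xy; have [-> ->] : x = v /\ y = v by split; apply/comp_v.
Qed.

Lemma trans_walkSE : transitive E -> forall n x y, walk n.+1 x y <-> E x y.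
Proof.
move=> trans n x y; split.
- elim: n x => [|n IHn] x [z e_xz]; first by move=> /= <-.
  by move/IHn; apply: trans.
- move=> e_xy; apply: (walk_rcons (walk_loop _ _) e_xy).
  by apply: (trans y); rewrite // Esym.
Qed.

Lemma case_i_satisfies t t' : case_i E -> leaves t = leaves t' -> satisfies E t t'.
Proof.
move=> /case_i_trans trans eq_n; apply: satisfies_of_walk_eq => //.
  by case=> // n x y _; rewrite trans_walkSE.
case=> [|i] lt_i x y; first by rewrite !depth0.
have lt_ti : 0 < i.+1 < leaves t by [].
have lt_ti' : 0 < i.+1 < leaves t' by rewrite -eq_n.
by rewrite (depth_parent lt_ti) (depth_parent lt_ti') !trans_walkSE.
Qed.

Lemma case_ii_walk3 : case_ii E -> forall x y, walk 3 x y -> E x y.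
Proof.
move=> [comps _] x y [a e_xa [b e_ab [c e_bc /= eq_cy]]]; subst c.
have c_xa : Defs.comp E x a by apply: rt_step.
have c_xb : Defs.comp E x b by apply: rt_trans c_xa (rt_step _ _ _ _ e_ab).
have c_xy : Defs.comp E x y by apply: rt_trans c_xb (rt_step _ _ _ _ e_bc).
have c_xx : Defs.comp E x x by apply: rt_refl.
case: (comps x) => [[v [comp_v n_vv]] | [complete | [A [B [_ [_ [dis [_ edge]]]]]]]].
- by move: e_xa; have [-> ->] : x = v /\ a = v by split; apply/comp_v.
- exact: complete.
- move: e_xa e_ab e_bc => /edge - /(_ c_xx c_xa) e_xa /edge - /(_ c_xa c_xb) e_ab.
  move=> /edge - /(_ c_xb c_xy) e_by; apply/edge => //.
  by have := dis a; have := dis b; tauto.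
Qed.

Lemma walk_to_loop (step : forall x z y, E x z -> E z y -> E y y -> E x y) n x y :
  walk n x y -> E y y -> E x y.
Proof.
elim: n x => [|n IHn] x /=; first by move->.
by case=> z e_xz /IHn e_zy e_yy; apply: step e_xz (e_zy e_yy) e_yy.
Qed.

Section Walk3Closed.
Hypothesis walk3 : forall x y, walk 3 x y -> E x y.

Lemma walkSS n x y : walk n.+3 x y <-> walk n.+1 x y.
Proof.
split; last exact: walk_addn2.
case=> a e_xa [b e_ab [c e_bc w_cy]]; exists c => //.
by apply: walk3; exists a => //; exists b => //; exists c.
Qed.

Lemma walk_add_double k n x y : walk (n.+1 + k.*2) x y <-> walk n.+1 x y.
Proof.
elim: k => [|k IHk]; first by rewrite addn0.
by rewrite doubleS !addnS -IHk -addSn walkSS.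
Qed.

Lemma walk_eq_parity (m n : nat) x y : (m == 0) = (n == 0) -> odd m = odd n ->
  walk m x y <-> walk n x y.
Proof.
wlog le_mn : m n / m <= n => [hwlog | ].
  by case: (leqP m n) => [|/ltnW] le eq0 eq_odd; [|symmetry]; apply: hwlog.
case: m le_mn => [|m] le_mn; first by case: n {le_mn}.
move=> _ eq_odd; have even_d : ~~ odd (n - m.+1) by rewrite oddB // eq_odd addbb.
have -> : n = m.+1 + (n - m.+1)./2.*2.
  by move: (odd_double_half (n - m.+1)); rewrite (negbTE even_d); lia.
by rewrite walk_add_double.
Qed.

Lemma walk_odd_edge n x y : odd n -> walk n x y -> E x y.
Proof. by move=> odd_n; rewrite (@walk_eq_parity n 1) ?walk1 //; case: n odd_n. Qed.

Lemma complete_of_loop v w :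
  Defs.comp E v w -> E w w -> is_complete_loops E (Defs.comp E v).
Proof.
move=> c_vw e_ww.
have to_w x : Defs.comp E v x -> E x w.
  move=> c_vx; have [n w_xw] := comp_walk c_vx c_vw.
  apply: walk_to_loop w_xw e_ww => x' z y' e_x'z e_zy' e_y'y'.
  by apply: walk3; exists z => //; exists y' => //; exists y'.
move=> x y c_vx c_vy; apply: walk3; exists w; first exact: to_w.
by exists w => //; exists y; rewrite // Esym; apply: to_w.
Qed.

Lemma bipartite_of_loopless v u : E v u -> (forall w, Defs.comp E v w -> ~~ E w w) ->
  is_complete_bipartite E (Defs.comp E v).
Proof.
move=> e_vu loopless.
pose side b x := exists2 n, odd n = b & walk n v x.
have side_comp b x : side b x -> Defs.comp E v x by case=> n _ w; apply/compP; exists n.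
have side_edge b x y : side b x -> side (~~ b) y -> E x y.
  case=> m <- w_vx [n odd_n w_vy]; apply: (walk_odd_edge (n := m + n)).
    by rewrite oddD odd_n addbN addbb.
  exact: walk_cat (walk_rev w_vx) w_vy.
have side_step b x y : side b x -> E x y -> side (~~ b) y.
  by case=> n <- w_vx e_xy; exists n.+1; last exact: walk_rcons w_vx e_xy.
have side_of x : Defs.comp E v x -> side false x \/ side true x.
  case/compP=> n w_vx; case: (boolP (odd n)) => odd_n; [right | left]; exists n => //.
  exact/negbTE.
exists (side false), (side true); split; first by exists v, 0.
split; first by exists u, 1; last exact/walk1.
split.
  move=> x [s_f s_t]; have := loopless x (side_comp _ _ s_f).
  by rewrite (side_edge _ _ _ s_f s_t).
split.
  by move=> x; split=> [/side_of | [] /side_comp].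
move=> x y c_vx c_vy; split=> [e_xy | [[s_x s_y] | [s_x s_y]]].
- by case: (side_of x c_vx) => s_x; [left | right]; split=> //; apply: side_step s_x e_xy.
- exact: side_edge s_x s_y.
- exact: side_edge s_x s_y.
Qed.

End Walk3Closed.

Lemma no_neighbor_trivial v : (forall u, ~~ E v u) -> is_trivial E (Defs.comp E v).
Proof.
move=> isolated; exists v; split; last exact/negP/isolated.
move=> w; split=> [/compP [[|n] w_vw] // | ->]; last exact: rt_refl.
by case: w_vw => z e_vz; have := isolated z; rewrite e_vz.
Qed.

Lemma walk3_closed_components : (forall x y, walk 3 x y -> E x y) -> forall v,
  [\/ is_trivial E (Defs.comp E v), is_complete_loops E (Defs.comp E v)
     | is_complete_bipartite E (Defs.comp E v)].
Proof.
move=> walk3 v.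
have [[u e_vu] | isolated] := classic (exists u, E v u); last first.
  by apply/Or31/no_neighbor_trivial => u; apply/negP => e_vu; apply: isolated; exists u.
have [[w c_vw e_ww] | loopless] := classic (exists2 w, Defs.comp E v w & E w w).
  exact/Or32/(complete_of_loop walk3 c_vw e_ww).
apply/Or33/(bipartite_of_loopless walk3 e_vu) => w c_vw.
by apply/negP => e_ww; apply: loopless; exists w.
Qed.

Lemma even_walk_closed_case_i n : (forall x y, walk n.*2.+2 x y -> E x y) -> case_i E.
Proof.
move=> d_closed v.
have [[u e_vu] | isolated] := classic (exists u, E v u); last first.
  by left; apply: no_neighbor_trivial => u; apply/negP => e_vu; apply: isolated; exists u.
have loop w : Defs.comp E v w -> E w w.
  case/(comp_neighbor e_vu) => z e_wz; apply: d_closed.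
  by exists z => //; exists w; [rewrite Esym | apply: walk_bounce e_wz].
right=> x y c_vx c_vy; have [m w_xy] := comp_walk c_vx c_vy.
apply: walk_to_loop w_xy (loop y c_vy) => x' z y' e_x'z e_zy' e_y'y'.
apply: d_closed; apply: (walk_cat (m := 2)) (walk_loop _ e_y'y').
by exists z => //; apply/walk1.
Qed.

Lemma walk3_closed_of_odd n :
  (forall x y, walk n.*2.+3 x y -> E x y) -> forall x y, walk 3 x y -> E x y.
Proof.
move=> d_closed x y w3; apply: d_closed.
have [c e_cy] : exists c, E c y by case: w3 => a _ [b _ [c e_bc /= <-]]; exists b.
by apply: (walk_cat w3 (walk_bounce n (_ : E y c))); rewrite Esym.
Qed.

Lemma nonadjacent_walk : ~ case_i E -> ~ case_ii E ->
  forall d, 1 < d -> exists x y, walk d x y /\ ~~ E x y.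
Proof.
move=> not_i not_ii d lt1d; apply: NNPP => no_walk.
have d_closed x y : walk d x y -> E x y.
  by move=> w_xy; apply: NNPP => /negP n_xy; apply: no_walk; exists x, y.
have [k [d_eq | d_eq]] : exists k, d = k.*2.+2 \/ d = k.*2.+3.
  exists (d - 2)./2; move: (odd_double_half (d - 2)); case: (odd _); lia.
  by subst d; apply/not_i/(even_walk_closed_case_i d_closed).
subst d; have comps := walk3_closed_components (walk3_closed_of_odd d_closed).
have [[v bip] | no_bip] := classic (exists v, is_complete_bipartite E (Defs.comp E v)).
  by apply: not_ii; split=> [w | ]; [case: (comps w); tauto | exists v].
apply: not_i => w.
by case: (comps w) => [triv | compl | bip]; [left | right | case: no_bip; exists w].
Qed.

Lemma complete_bipartite_loopless_edge (K : V -> Prop) : is_complete_bipartite E K ->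
  exists x y, [/\ E x y, ~~ E x x & ~~ E y y].
Proof.
case=> A [B [[a A_a] [[b B_b] [dis [cover edge]]]]].
have [K_a K_b] : K a /\ K b by split; apply/cover; [left | right].
exists a, b; split; first by apply/edge => //; left.
- by apply/negP => /edge - /(_ K_a K_a); have := dis a; tauto.
- by apply/negP => /edge - /(_ K_b K_b); have := dis b; tauto.
Qed.

Lemma case_ii_satisfiesP t t' : case_ii E -> leaves t = leaves t' ->
  satisfies E t t' <-> forall i, i < leaves t -> odd (depth t i) = odd (depth t' i).
Proof.
move=> cii eq_n; have walk3 := case_ii_walk3 cii.
split.
  case: cii => _ [v /complete_bipartite_loopless_edge [x [y [e_xy n_xx n_yy]]]].
  exact: satisfies_depth_parity e_xy n_xx n_yy eq_n.
move=> eq_odd; apply: satisfies_of_walk_eq => // [n x y | i lt_i x y].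
  exact: walk_odd_edge.
have eq0 : (depth t i == 0) = (depth t' i == 0) by rewrite !depth_eq0 -?eq_n.
exact (walk_eq_parity walk3 x y eq0 (eq_odd _ lt_i)).
Qed.

End Walks.

Theorem proposition7p1 (V : Type) (E : V -> V -> bool)
    (Esym : forall x y, E x y = E y x) :
  (case_i E ->
     forall (n : nat) (t t' : bterm), leaves t = n -> leaves t' = n ->
       satisfies E t t') /\
  (case_ii E ->
     forall (n : nat) (t t' : bterm), leaves t = n -> leaves t' = n -> t <> t' ->
       (satisfies E t t' <-> ~~ odd (Mtt n t t'))) /\
  (~ case_i E -> ~ case_ii E ->
     forall (n : nat) (t t' : bterm), leaves t = n -> leaves t' = n -> t <> t' ->
       ~ satisfies E t t').
Proof.
split; [|split].
- by move=> ci n t t' <- eq_n; apply: case_i_satisfies.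
- move=> cii n t t' <- eq_n _; rewrite case_ii_satisfiesP //.
  exact: rwP (Mtt_evenP _ _ _).
- move=> not_i not_ii n t t' <- eq_n; apply: distinct_not_satisfies => //.
  exact: nonadjacent_walk.
Qed.
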